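(* There exist a polynomial $p$ and a constant $c>0$ such that for every integer $k\geq 1$ there exist an approval election $E=(N,C,(A_v)_{v\in N},k)$ with $|N|\le p(k)$ voters, a committee $W_0\subseteq C$ with $|W_0|=k$, and a valid sequence of swaps $(a_1,b_1),\dots,(a_s,b_s)$ starting from $W_0$ with $s\ge c\,k^{\log k}$ (i.e., of length $\Omega(k^{\log k})$) such that every swap in the sequence strictly increases the PAV score, i.e., $\Delta(W_{t-1},a_t,b_t)>0$ for all $t\in[s]$.
   Context: An approval election is a tuple $E=(N,C,(A_v)_{v\in N},k)$ where $N=[n]$ is a set of voters, $C$ is a finite set of candidates, $A_v\subseteq C$ is the approval ballot of voter $v$, and $k\in[|C|]$ is the target committee size. A committee is a subset of $C$. The PAV score of a committee $W$ is $\textsc{pavsc}(W)=\sum_{v\in N}\sum_{j=1}^{|A_v\cap W|}\frac{1}{j}$. For $a\in W$, $b\notin W$, let $\Delta(W,a,b)=\textsc{pavsc}((W\setminus\{a\})\cup\{b\})-\textsc{pavsc}(W)$. A sequence of swaps $(a_1,b_1),\dots,(a_s,b_s)$ is valid starting from $W_0$ if, setting $W_t=(W_{t-1}\cup\{b_t\})\setminus\{a_t\}$, we have $a_t\in W_{t-1}$ and $b_t\notin W_{t-1}$ for every $t\in[s]$. Here $\log$ denotes the base-2 logarithm. *)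

From HB Require Import structures.
From mathcomp Require Import all_boot all_order all_algebra.
From mathcomp Require Import reals exp.
Set Implicit Arguments. Unset Strict Implicit. Unset Printing Implicit Defensive.
Import Order.TTheory GRing.Theory Num.Theory.
Local Open Scope ring_scope.

Definition pavsc (R : realType) (n m : nat) (A : 'I_n -> {set 'I_m})
  (W : {set 'I_m}) : R :=
  \sum_(v < n) \sum_(j < #|A v :&: W|) (j.+1%:R)^-1.

Definition pav_delta (R : realType) (n m : nat) (A : 'I_n -> {set 'I_m})
  (W : {set 'I_m}) (a b : 'I_m) : R :=
  pavsc R A (b |: (W :\ a)) - pavsc R A W.

Fixpoint pav_improving_seq (R : realType) (n m : nat) (A : 'I_n -> {set 'I_m})
  (W : {set 'I_m}) (s : seq ('I_m * 'I_m)) : Prop :=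
  match s with
  | [::] => True
  | (a, b) :: s' =>
      [/\ a \in W, b \notin W, 0 < pav_delta R A W a b
        & pav_improving_seq R A ((b |: W) :\ a) s']
  end.

From HB Require Import structures.
From mathcomp Require Import all_boot all_order all_algebra.
From mathcomp Require Import reals exp.
From mathcomp Require Import zify ring.
Set Implicit Arguments. Unset Strict Implicit. Unset Printing Implicit Defensive.
Import Order.TTheory GRing.Theory Num.Theory.
Local Open Scope ring_scope.

(* Candidates form d + 1 levels of positions 0..Q together with B + d fillers,
   and a committee consists of all fillers and one position p l on each level.
   Level j carries voters weighted by the binomial coefficients 'C(d - 1 - j, g)
   who approve B + g fillers and, depending on parities, the chosen positions of
   levels j and j + 1.  This makes the PAV score a constant plus
   sum_j w_j * progress_j, where progress_j in [0, Q] measures how far p j has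
   moved in the direction fixed by the parity of p (j + 1), and the alternating
   binomial identity sum_g (-1)^g 'C(m, g) / (x + g) = Beta(x, m + 1) gives
   w_j = Beta(B + 1, d - j + 1).  When Q d <= B we get Q w_(j-1) < w_j, so moving
   level j one step pays for flipping the direction of level j - 1, which resets
   its progress from Q to 0.  The levels thus form a reflected mixed-radix
   counter, and counting through it is a run of Q ^ d improving swaps.  Taking
   d = 2 (L + 1) with L = floor(log k) and Q ~ k / d, so that Q ^ 2 >= k, gives
   committees of size k, at most 8 k ^ 5 voters and k ^ (L + 1) swaps; small k
   are covered by a single improving swap. *)

Lemma setU1D1 (T : finType) (W : {set T}) (a b : T) :
  a != b -> (b |: W) :\ a = b |: (W :\ a).
Proof.
move=> ab; apply/setP => x; rewrite !inE.
by case: (eqVneq x a) => [->|] //=; rewrite (negbTE ab).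
Qed.

Lemma imsetD1 (aT rT : finType) (f : aT -> rT) (W : {set aT}) (a : aT) :
  injective f -> f @: (W :\ a) = f @: W :\ f a.
Proof.
move=> injf; apply/setP => y; rewrite !inE.
apply/imsetP/andP => [[x /setD1P[xa xW] ->]|[ya /imsetP[x xW yx]]].
  by rewrite (inj_eq injf) xa imset_f.
exists x => //; rewrite !inE xW andbT.
by apply: contraNneq ya => xa; rewrite yx xa.
Qed.

Section PAVScore.
Variables (R : numFieldType) (V C : finType) (A : V -> {set C}).

Definition harmonic (n : nat) : R := \sum_(j < n) (j.+1%:R)^-1.

Lemma harmonicS n : harmonic n.+1 = harmonic n + (n.+1%:R)^-1.
Proof. by rewrite /harmonic big_ord_recr. Qed.

Definition pav_score (W : {set C}) : R := \sum_v harmonic #|A v :&: W|.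

Fixpoint pav_improving (W : {set C}) (s : seq (C * C)) : Prop :=
  if s is (a, b) :: s' then
    [/\ a \in W, b \notin W, pav_score W < pav_score (b |: (W :\ a))
      & pav_improving (b |: (W :\ a)) s']
  else True.

End PAVScore.

Definition has_improving_run (R : numFieldType) (k nv len : nat) : Prop :=
  exists (V C : finType) (A : V -> {set C}) (W : {set C}) (s : seq (C * C)),
    [/\ (#|V| <= nv)%N, #|W| = k, (len <= size s)%N & pav_improving R A W s].

Lemma has_improving_run_le (R : numFieldType) k nv nv' len len' :
  (nv <= nv')%N -> (len' <= len)%N ->
  has_improving_run R k nv len -> has_improving_run R k nv' len'.
Proof.
move=> nv_le len_le [V [C [A [W [s [Vnv Wk lens imp]]]]]].
by exists V, C, A, W, s; split; rewrite ?(leq_trans Vnv) ?(leq_trans len_le).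
Qed.

Lemma single_swap_run (R : numFieldType) k : has_improving_run R k.+1 1 1.
Proof.
exists 'I_1, (option 'I_k.+1), (fun=> [set None]), [set~ None], [:: (Some ord0, None)].
split=> //; first by rewrite card_ord.
  by rewrite cardsC1 card_option card_ord.
split=> //; rewrite ?inE ?eqxx // /pav_score !big_ord1.
rewrite setICr (setIidPl _) ?sub1set ?setU11 // cards0 cards1.
by rewrite /harmonic big_ord0 big_ord1 invr_gt0 ltr0Sn.
Qed.


Section OrdinalElection.
Variables (R : realType) (V C : finType) (A : V -> {set C}).

Definition ord_ballot (v : 'I_#|V|) : {set 'I_#|C|} := enum_rank @: A (enum_val v).

Lemma pavsc_ord_ballot (W : {set C}) :
  pavsc R ord_ballot (enum_rank @: W) = pav_score R A W.
Proof.
rewrite /pavsc (reindex enum_rank) /=; last exact/onW_bij/enum_rank_bij.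
apply: eq_bigr => v _; rewrite /ord_ballot enum_rankK -imsetI; last first.
  by move=> x y _ _; apply: enum_rank_inj.
by rewrite card_imset //; apply: enum_rank_inj.
Qed.

Lemma pav_improving_ord_ballot (W : {set C}) (s : seq (C * C)) :
  pav_improving R A W s ->
  pav_improving_seq R ord_ballot (enum_rank @: W)
    [seq (enum_rank x.1, enum_rank x.2) | x <- s].
Proof.
have rk_inj := @enum_rank_inj C.
elim: s W => [|[a b] s IHs] W //= [aW bW gain imp].
have ab : a != b by apply: contraNneq bW => <-.
have swapE : enum_rank @: (b |: (W :\ a)) =
              enum_rank b |: (enum_rank @: W :\ enum_rank a).
  by rewrite imsetU1 imsetD1.
split.
- by rewrite mem_imset.
- by rewrite mem_imset.
- by rewrite /pav_delta -swapE !pavsc_ord_ballot subr_gt0.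
- by rewrite setU1D1 ?(inj_eq rk_inj) // -swapE; apply: IHs.
Qed.

End OrdinalElection.

Lemma ordinal_improving_run (R : realType) k nv len :
  has_improving_run R k nv len ->
  exists m n (A : 'I_n -> {set 'I_m}) (W0 : {set 'I_m}) (s : seq ('I_m * 'I_m)),
    [/\ (n <= nv)%N, #|W0| = k, (len <= size s)%N & pav_improving_seq R A W0 s].
Proof.
case=> V [C [A [W [s [Vnv Wk lens imp]]]]].
exists #|C|, #|V|, (ord_ballot A), (enum_rank @: W),
  [seq (enum_rank x.1, enum_rank x.2) | x <- s].
split=> //; last exact: pav_improving_ord_ballot.
  by rewrite card_imset //; apply: enum_rank_inj.
by rewrite size_map.
Qed.

Section AlternatingBinomialSum.
Variable R : numFieldType.

Definition alt_binom_sum (m : nat) (f : nat -> R) : R :=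
  \sum_(g < m.+1) 'C(m, g)%:R * ((-1) ^+ g * f g).

Lemma alt_binom_sum_widen m n (f : nat -> R) : (m < n)%N ->
  \sum_(g < n) 'C(m, g)%:R * ((-1) ^+ g * f g) = alt_binom_sum m f.
Proof.
elim: n => [//|n IHn]; rewrite ltnS leq_eqVlt => /predU1P[<- //|mn].
by rewrite big_ord_recr /= IHn // bin_small // mul0r addr0.
Qed.

Lemma alt_binom_sumS m (f : nat -> R) :
  alt_binom_sum m.+1 f = alt_binom_sum m f - alt_binom_sum m (f \o succn).
Proof.
rewrite [LHS]big_ord_recl /=.
under eq_bigr => g _ do rewrite binS natrD mulrDl.
rewrite big_split /= addrA -sumrN; congr (_ + _).
  rewrite -(@alt_binom_sum_widen m m.+2) // [RHS]big_ord_recl !bin0.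
  by congr (_ + _); apply: eq_bigr => g _; rewrite /bump add1n.
by apply: eq_bigr => g _; rewrite /bump add1n exprS mulN1r mulNr mulrN.
Qed.

Definition rising (n : nat) (x : R) : R := \prod_(i < n) (x + i%:R).

Definition beta (m : nat) (x : R) : R := m`!%:R / rising m.+1 x.

Lemma rising_gt0 n x : 0 < x -> 0 < rising n x.
Proof.
by move=> x0; apply: prodr_gt0 => i _; apply: (lt_le_trans x0); rewrite lerDl.
Qed.

Lemma beta_gt0 m x : 0 < x -> 0 < beta m x.
Proof. by move=> x0; rewrite divr_gt0 ?rising_gt0 // ltr0n fact_gt0. Qed.

Lemma risingSr n x : rising n.+1 x = rising n x * (x + n%:R).
Proof. by rewrite /rising big_ord_recr. Qed.

Lemma risingSl n x : rising n.+1 x = x * rising n (x + 1).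
Proof.
rewrite /rising big_ord_recl addr0; congr (_ * _); apply: eq_bigr => i _.
by rewrite lift0 -addn1 natrD addrA addrAC.
Qed.

Lemma betaSr m x : beta m.+1 x = beta m x * m.+1%:R / (x + m.+1%:R).
Proof. by rewrite /beta risingSr factS natrM invfM; ring. Qed.

Lemma beta_diff m x : 0 < x -> beta m x - beta m (x + 1) = beta m.+1 x.
Proof.
move=> x0.
have rx0 : rising m.+1 x != 0 by rewrite gt_eqF ?rising_gt0.
have x0' : x != 0 by rewrite gt_eqF.
have xm0 : x + (1 + m%:R) != 0.
  by rewrite gt_eqF // addr_gt0 // ltr_pwDl ?ler0n.
have rx1E : rising m.+1 (x + 1) = rising m.+1 x * (x + m.+1%:R) / x.
  by rewrite -risingSr [rising m.+2 x]risingSl (mulrC x) mulfK.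
rewrite betaSr /beta rx1E; field.
by rewrite xm0 rx0 x0'.
Qed.

Lemma alt_binom_sum_inv m x : 0 < x ->
  alt_binom_sum m (fun g => (x + g%:R)^-1) = beta m x.
Proof.
elim: m x => [|m IHm] x x0.
  by rewrite /alt_binom_sum /beta /rising !big_ord1 bin0 expr0 !mul1r.
rewrite alt_binom_sumS -beta_diff // -!IHm ?addr_gt0 // /alt_binom_sum.
congr (_ - _); apply: eq_bigr => g _.
by rewrite /= -[(g : nat).+1]addn1 natrD addrA (addrAC x).
Qed.

End AlternatingBinomialSum.

Lemma bin_leq_exp2 m g : ('C(m, g) <= 2 ^ m)%N.
Proof.
elim: m g => [|m IHm] [|g] //; first by rewrite bin0 expn_gt0.
by rewrite binS expnS mul2n -addnn leq_add.
Qed.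

Lemma sum_ltn n N : (\sum_(f < N) (f < n : nat))%N = minn n N.
Proof.
elim: N => [|N IHN]; first by rewrite big_ord0 minn0.
by rewrite big_ord_recr /= IHN; case: (ltnP N n) => /=; lia.
Qed.

Lemma sum_pick2 N a (X Y : bool) : (a.+1 < N)%N ->
  (\sum_(l < N) (((l == a :> nat) && X) || ((l == a.+1 :> nat) && Y) : nat))%N
  = (X + Y)%N.
Proof.
move=> aN; have aN' : (a < N)%N by apply: ltnW.
rewrite (bigD1 (Ordinal aN)) //= (bigD1 (Ordinal aN')) /=; last first.
  by rewrite -val_eqE /= ltn_eqF.
rewrite !eqxx gtn_eqF // ltn_eqF //= orbF big1 ?addn0 1?addnC //.
move=> l /andP[la1 la]; rewrite -!val_eqE /= in la1 la.
by rewrite (negbTE la) (negbTE la1).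
Qed.

Lemma sum_supported2 (V : zmodType) n j (h : nat -> V) : (j < n)%N ->
  (forall l, l != j -> l.+1 != j -> h l = 0) ->
  \sum_(l < n) h l = h j + (if j is j'.+1 then h j' else 0).
Proof.
move=> jn h0; rewrite (bigD1 (Ordinal jn)) //=; congr (_ + _).
case: j jn h0 => [|j] jn h0.
  by rewrite big1 // => l; rewrite -val_eqE /= => lj; apply: h0.
rewrite (bigD1 (Ordinal (ltnW jn))) /=; last by rewrite -val_eqE /= ltn_eqF.
rewrite big1 ?addr0 // => l; rewrite -!val_eqE /= => /andP[lj1 lj].
by apply: h0; rewrite ?eqSS.
Qed.

Lemma card_set_sum (T : finType) (P : pred T) : #|[set x | P x]| = (\sum_x P x)%N.
Proof. by rewrite -sum1dep_card big_mkcond. Qed.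

Section Construction.
Variables (d Q B : nat).

(* Candidates are B + d fillers [inl f] and the positions [inr (l, t)].  The
   voters (j, i, c, g, r) with r >= 'C(d.-1 - j, g) approve nothing: the index r
   only realizes the multiplicity 'C(d.-1 - j, g) of (j, i, c, g). *)
Definition voter := ('I_d * 'I_Q * bool * 'I_d * 'I_(2 ^ d)%N)%type.
Definition cand := ('I_(B + d)%N + 'I_d.+1 * 'I_Q.+1)%type.

Definition approves (v : voter) (x : cand) : bool :=
  let: (j, i, c, g, r) := v in
  (r < 'C(d.-1 - j, g))%N &&
  match x with
  | inl f => (f < B + g)%N
  | inr (l, t) => ((l == j :> nat) && ((i < t)%N == (c == odd g)))
                  || ((l == j.+1 :> nat) && (c != odd t))
  end.

Definition ballot (v : voter) : {set cand} := [set x | approves v x].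

Definition valid (p : nat -> nat) := forall l, (l <= d)%N -> (p l <= Q)%N.

Definition seat (p : nat -> nat) (y : 'I_(B + d)%N + 'I_d.+1) : cand :=
  match y with inl f => inl f | inr l => inr (l, inord (p l)) end.

Definition committee (p : nat -> nat) : {set cand} :=
  [set seat p y | y : 'I_(B + d)%N + 'I_d.+1].

Lemma seat_inj p : injective (seat p).
Proof. by move=> [f|l] [f'|l'] //= [->]. Qed.

Lemma card_committee p : #|committee p| = (B + d + d.+1)%N.
Proof. by rewrite card_imset; [rewrite card_sum !card_ord | apply: seat_inj]. Qed.

Lemma card_ballot_committee p j i c g r : valid p ->
  #|ballot (j, i, c, g, r) :&: committee p| =
  if (r < 'C(d.-1 - j, g))%N then
    (B + g + ((i < p j)%N == (c == odd g)) + (c != odd (p j.+1)))%N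
  else 0%N.
Proof.
move=> vp; set v := (j, i, c, g, r).
have -> : ballot v :&: committee p = seat p @: [set y | approves v (seat p y)].
  apply/setP => x; rewrite !inE; apply/andP/imsetP.
    by case=> vx /imsetP[y _ xE]; exists y; rewrite // inE -xE.
  by case=> y; rewrite inE => vy ->; rewrite imset_f.
rewrite card_imset; last exact: seat_inj.
rewrite card_set_sum big_sumType /= /approves.
case: (r < _)%N => /=; last by rewrite !big1.
rewrite sum_ltn -addnA; congr (_ + _)%N.
  by apply/minn_idPl; rewrite leq_add2l ltnW.
rewrite -(sum_pick2 _ _ (ltn_ord j : j.+1 < d.+1)%N).
apply: eq_bigr => -[l ld] _ /=; rewrite inordK; last by rewrite ltnS vp // -ltnS.
case: (eqVneq l j) => [->|_]; first by rewrite ltn_eqF.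
by case: (eqVneq l j.+1) => [->|].
Qed.

Variable R : numFieldType.

Lemma sum_voter (F : voter -> R) :
  \sum_v F v = \sum_(j < d) \sum_(i < Q) \sum_(c : bool) \sum_(g < d)
                 \sum_(r < 2 ^ d) F (j, i, c, g, r).
Proof. by rewrite !pair_big; apply: eq_bigr => [[[[[j i] c] g] r]]. Qed.

Definition level_score (j : nat) (al pi : bool) : R :=
  \sum_(c : bool) \sum_(g < d)
    'C(d.-1 - j, g)%:R * harmonic R (B + g + (al == (c == odd g)) + (c != pi))%N.

Lemma pav_score_committee_levels p : valid p ->
  pav_score R ballot (committee p) =
  \sum_(j < d) \sum_(i < Q) level_score j (i < p j)%N (odd (p j.+1)).
Proof.
move=> vp; rewrite /pav_score sum_voter.
apply: eq_bigr => j _; apply: eq_bigr => i _.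
apply: eq_bigr => c _; apply: eq_bigr => g _.
under eq_bigr => r _ do rewrite card_ballot_committee //.
set n := (B + g + _ + _)%N.
rewrite (eq_bigr (fun r : 'I_(2 ^ d)%N =>
  (r < 'C(d.-1 - j, g) : nat)%:R * harmonic R n)); last first.
  by move=> r _; case: ifP => _; rewrite ?mul1r // mul0r /harmonic big_ord0.
rewrite -mulr_suml -natr_sum sum_ltn (minn_idPl _) //.
by rewrite (leq_trans (bin_leq_exp2 _ _)) // leq_exp2l //; lia.
Qed.

Lemma level_score_negb j al pi :
  level_score j (~~ al) (~~ pi) = level_score j al pi.
Proof.
rewrite /level_score !big_bool /= addrC.
by congr (_ + _); apply: eq_bigr => g _; case: al; case: pi; case: (odd g).
Qed.

Definition level_weight (j : nat) : R :=
  level_score j true false - level_score j false false.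

Lemma level_scoreE j al pi :
  level_score j al pi = level_score j false false + level_weight j *+ (al != pi).
Proof.
rewrite /level_weight; case: al; case: pi => /=.
- by rewrite mulr0n addr0 -level_score_negb.
- by rewrite mulr1n addrC subrK.
- by rewrite mulr1n addrC subrK -level_score_negb.
- by rewrite mulr0n addr0.
Qed.

Lemma level_weight_beta j : (j < d)%N ->
  level_weight j = beta (d.-1 - j).+1 (B.+1)%:R.
Proof.
move=> jd; set x : R := (B.+1)%:R.
have termE g : \sum_(c : bool)
    (harmonic R (B + g + (true == (c == odd g)) + (c != false))%N
     - harmonic R (B + g + (false == (c == odd g)) + (c != false))%N)
    = (-1) ^+ g * (x + g%:R)^-1 - (-1) ^+ g * (x + 1 + g%:R)^-1.
  have xgE : x + g%:R = (B + g).+1%:R by rewrite /x -natrD addSn.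
  have xg1E : x + 1 + g%:R = (B + g).+2%:R by rewrite /x natr1 -natrD !addSn.
  rewrite big_bool /= xgE xg1E -(signr_odd _ g).
  by case: (odd g) => /=; rewrite ?addn0 ?addn1 !harmonicS; ring.
rewrite /level_weight /level_score -sumrB.
under eq_bigr => c _ do rewrite -sumrB.
rewrite exchange_big /=.
rewrite (eq_bigr (fun g : 'I_d => 'C(d.-1 - j, g)%:R *
   ((-1) ^+ g * (x + g%:R)^-1 - (-1) ^+ g * (x + 1 + g%:R)^-1))); last first.
  by move=> g _; rewrite -termE mulr_sumr; apply: eq_bigr => c _; rewrite mulrBr.
have md : (d.-1 - j < d)%N by lia.
under eq_bigr => g _ do rewrite mulrBr.
rewrite sumrB (alt_binom_sum_widen (fun g => (x + g%:R)^-1) md).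
rewrite (alt_binom_sum_widen (fun g => (x + 1 + g%:R)^-1) md).
by rewrite !alt_binom_sum_inv ?beta_diff ?addr_gt0 ?ltr0Sn.
Qed.

Lemma level_weight_gt0 j : (j < d)%N -> 0 < level_weight j.
Proof. by move=> jd; rewrite level_weight_beta // beta_gt0 ?ltr0Sn. Qed.

Lemma level_weight_dominates j : (Q * d <= B)%N -> (j.+1 < d)%N ->
  level_weight j *+ Q < level_weight j.+1.
Proof.
move=> QdB jd; rewrite (level_weight_beta (ltnW jd)) (level_weight_beta jd).
have -> : (d.-1 - j = (d.-1 - j.+1).+1)%N by lia.
set m := (d.-1 - j.+1).+1; set x : R := (B.+1)%:R.
have xm0 : 0 < x + m.+1%:R by rewrite addr_gt0 ?ltr0Sn.
have Qm : (Q * m.+1 <= Q * d)%N by rewrite leq_mul2l; apply/orP; right; lia.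
rewrite betaSr -mulrA -mulrnAr gtr_pMr ?beta_gt0 ?ltr0Sn // -mulrnAl.
rewrite ltr_pdivrMr // mul1r -[m.+1%:R *+ Q]mulr_natr -natrM /x -natrD ltr_nat.
by rewrite mulnC; lia.
Qed.

Definition progress (t : nat) (pi : bool) : nat := if pi then (Q - t)%N else t.

(* Level l moves up when p l.+1 is even and down when it is odd. *)
Definition level_progress (p : nat -> nat) (l : nat) : nat :=
  progress (p l) (odd (p l.+1)).

Lemma sum_progress t pi : (t <= Q)%N ->
  (\sum_(i < Q) ((i < t)%N != pi : nat))%N = progress t pi.
Proof.
move=> tQ; have sum_lt : (\sum_(i < Q) ((i < t)%N : nat))%N = t.
  by rewrite sum_ltn; apply/minn_idPl.
case: pi => /=; last by rewrite -[RHS]sum_lt; apply: eq_bigr => i _; case: (i < t)%N.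
have sumC : (\sum_(i < Q) (~~ (i < t)%N : nat) + \sum_(i < Q) ((i < t)%N : nat) = Q)%N.
  rewrite -big_split /=; transitivity (\sum_(i < Q) 1)%N.
    by apply: eq_bigr => i _; case: (i < t)%N.
  by rewrite sum1_card card_ord.
rewrite sum_lt in sumC; rewrite -[in RHS]sumC addnK.
by apply: eq_bigr => i _; case: (i < t)%N.
Qed.

Definition potential (p : nat -> nat) : R :=
  \sum_(j < d) level_weight j *+ level_progress p j.

Lemma pav_score_committee p : valid p ->
  pav_score R ballot (committee p) =
  \sum_(j < d) level_score j false false *+ Q + potential p.
Proof.
move=> vp; rewrite pav_score_committee_levels // /potential -big_split /=.
apply: eq_bigr => j _; under eq_bigr => i _ do rewrite level_scoreE.
rewrite big_split /= sumr_const card_ord sumrMnr sum_progress //.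
by apply: vp; apply: ltnW.
Qed.

Definition upd (p : nat -> nat) (j t : nat) : nat -> nat :=
  fun l => if l == j then t else p l.

Definition next_pos (j : nat) (p : nat -> nat) : nat :=
  if odd (p j.+1) then (p j).-1 else (p j).+1.

Definition advance (j : nat) (p : nat -> nat) : nat -> nat := upd p j (next_pos j p).

Lemma valid_upd p j t : valid p -> (t <= Q)%N -> valid (upd p j t).
Proof. by move=> vp tQ l ld; rewrite /upd; case: eqP => // _; apply: vp. Qed.

Lemma advance_spec p j : valid p -> (j <= d)%N -> (level_progress p j < Q)%N ->
  [/\ (next_pos j p <= Q)%N, next_pos j p != p j & odd (next_pos j p) = ~~ odd (p j)].
Proof.
move=> vp jd; have := vp j jd; rewrite /level_progress /progress /next_pos.
case: (odd _) => pjQ hp /=; split; lia.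
Qed.

Lemma valid_advance p j : valid p -> (j <= d)%N -> (level_progress p j < Q)%N ->
  valid (advance j p).
Proof. by move=> vp jd hp; have [tQ _ _] := advance_spec vp jd hp; apply: valid_upd. Qed.

Lemma level_progress_advance p j : valid p -> (j <= d)%N ->
  (level_progress p j < Q)%N ->
  level_progress (advance j p) j = (level_progress p j).+1.
Proof.
move=> vp jd; have := vp j jd.
rewrite /level_progress /advance /upd eqxx gtn_eqF // /progress /next_pos.
by case: (odd _) => pjQ hp; lia.
Qed.

Lemma level_progress_advance_below p j : valid p -> (j < d)%N ->
  (level_progress p j.+1 < Q)%N ->
  level_progress (advance j.+1 p) j = (Q - level_progress p j)%N.
Proof.
move=> vp jd hp; have [_ _ oddE] := advance_spec vp jd hp.
have := vp j (ltnW jd).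
rewrite /level_progress /advance /upd eqxx ltn_eqF // oddE /progress.
by case: (odd _) => /= pjQ; lia.
Qed.

Lemma level_progress_advance_other p j l : l != j -> l.+1 != j ->
  level_progress (advance j p) l = level_progress p l.
Proof.
by move=> lj l1j; rewrite /level_progress /advance /upd (negbTE lj) (negbTE l1j).
Qed.

Lemma potential_advance_gt p j : (Q * d <= B)%N -> valid p -> (j < d)%N ->
  (level_progress p j < Q)%N ->
  (forall j', j = j'.+1 -> level_progress p j' = Q) ->
  potential p < potential (advance j p).
Proof.
move=> QdB vp jd hp top_end; rewrite -subr_gt0 /potential -sumrB.
rewrite (sum_supported2 (h := fun l => level_weight l *+ level_progress (advance j p) l
                                      - level_weight l *+ level_progress p l) jd) /=.
  2: by move=> l lj l1j; rewrite level_progress_advance_other // subrr.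
rewrite (level_progress_advance vp (ltnW jd) hp) (mulrS (level_weight j)) addrK.
case: j jd hp top_end => [|j] jd hp top_end; first by rewrite addr0 level_weight_gt0.
rewrite (level_progress_advance_below vp (ltnW jd) hp) top_end //.
by rewrite subnn mulr0n sub0r subr_gt0 level_weight_dominates.
Qed.

Definition grid (l t : nat) : cand := inr (inord l, inord t).

Lemma mem_committee p x : valid p ->
  (x \in committee p) = if x is inr (l, t) then (t == p l :> nat) else true.
Proof.
move=> vp; have plQ (l : 'I_d.+1) : (p l < Q.+1)%N by rewrite ltnS vp // -ltnS.
case: x => [f|[l t]]; first by apply/imsetP; exists (inl f).
apply/imsetP/eqP => [[[f|l'] _ //= [-> ->]]|tE]; first by rewrite inordK.
by exists (inr l) => //=; congr (inr (_, _)); apply: val_inj; rewrite /= inordK -?tE.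
Qed.

Lemma grid_eqE x j t : (j <= d)%N -> (t <= Q)%N ->
  (x == grid j t) =
  if x is inr (l, u) then (l == j :> nat) && (u == t :> nat) else false.
Proof.
move=> jd tQ; case: x => [f|[l u]]; first by apply/negbTE/eqP.
have inr_inj : injective (@inr 'I_(B + d)%N ('I_d.+1 * 'I_Q.+1)) by move=> x y [].
by rewrite /grid (inj_eq inr_inj) xpair_eqE -!val_eqE /= !inordK.
Qed.

Lemma committee_upd p j t : valid p -> (j <= d)%N -> (t <= Q)%N -> t != p j ->
  [/\ grid j (p j) \in committee p, grid j t \notin committee p
    & grid j t |: (committee p :\ grid j (p j)) = committee (upd p j t)].
Proof.
move=> vp jd tQ tpj; have pjQ := vp j jd; have vq := valid_upd j vp tQ.
rewrite !(mem_committee _ vp) /= !inordK ?ltnS // eqxx; split => //.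
apply/setP => x.
rewrite !inE (mem_committee _ vp) (mem_committee _ vq) !grid_eqE //.
case: x => [//|[l u]] /=; rewrite /upd.
case: (eqVneq (l : nat) j) => [lj|] //=; rewrite lj.
by case: (eqVneq (u : nat) t) => [->|]; rewrite ?(negbTE tpj) ?andNb.
Qed.

Definition runs_from (p : nat -> nat) (n : nat) :=
  exists2 s, (n <= size s)%N & pav_improving R ballot (committee p) s.

(* q is reachable from p by n improving swaps. *)
Definition reach (p q : nat -> nat) (n : nat) :=
  forall m, runs_from q m -> runs_from p (n + m).

Lemma reach_trans p q r m n : reach p q m -> reach q r n -> reach p r (m + n).
Proof. by move=> pq qr k /qr /pq; rewrite addnA. Qed.

Lemma reach_le p q m n : (m <= n)%N -> reach p q n -> reach p q m.
Proof.
by move=> mn pq k /pq[s ns imp]; exists s; rewrite // (leq_trans _ ns) ?leq_add2r.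
Qed.

Section Counter.
Hypothesis QdB : (Q * d <= B)%N.

Lemma reach_advance p j : valid p -> (j < d)%N ->
  (level_progress p j < Q)%N ->
  (forall j', j = j'.+1 -> level_progress p j' = Q) ->
  reach p (advance j p) 1.
Proof.
move=> vp jd hp top_end m [s ms imp].
have [tQ tpj _] := advance_spec vp (ltnW jd) hp.
have [inW notinW swapE] := committee_upd vp (ltnW jd) tQ tpj.
exists ((grid j (p j), grid j (next_pos j p)) :: s) => //=.
split => //; rewrite swapE -/(advance j p) //.
rewrite !pav_score_committee ?ltrD2l ?potential_advance_gt //.
exact: valid_advance (ltnW jd) hp.
Qed.

Definition at_start (n : nat) (p : nat -> nat) :=
  forall l, (l < n)%N -> level_progress p l = 0%N.

(* A full cycle, of at least K improving swaps, of the counter formed by the n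
   lowest levels. *)
Definition sweeps (n K : nat) :=
  forall p, valid p -> at_start n p ->
  exists2 q, reach p q K &
    [/\ valid q,
        forall l, (l < n)%N -> level_progress q l = if l.+1 == n then Q else 0%N
      & forall l, (n <= l)%N -> q l = p l].

Lemma sweeps0 : sweeps 0 0.
Proof. by move=> p vp _; exists p. Qed.

Lemma sweeps_le n K K' : (K' <= K)%N -> sweeps n K -> sweeps n K'.
Proof.
by move=> KK sw p vp p0; have [q /(reach_le KK) pq qP] := sw p vp p0; exists q.
Qed.

Section SweepLevel.
Variables (n K : nat).
Hypotheses (nd : (n < d)%N) (sw : sweeps n K).

Lemma sweep_level p : valid p -> at_start n.+1 p -> forall r, (r <= Q)%N ->
  exists2 q, reach p q (r * K.+1) &
    [/\ valid q, at_start n q, level_progress q n = r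
      & forall l, (n < l)%N -> q l = p l].
Proof.
move=> vp p0; elim=> [|r IHr] rQ.
  by exists p => //; split=> // [l ln|]; apply: p0; rewrite // ltnW.
have [q pq [vq q0 qn qp]] := IHr (ltnW rQ).
have [q' qq' [vq' q'lo q'hi]] := sw vq q0.
have q'n : level_progress q' n = r by rewrite /level_progress !q'hi.
have hp : (level_progress q' n < Q)%N by rewrite q'n.
have top_end j' : n = j'.+1 -> level_progress q' j' = Q.
  by move=> nE; rewrite q'lo nE ?eqxx.
exists (advance n q').
  apply: reach_le (reach_trans (reach_trans pq qq') (reach_advance vq' nd hp top_end)).
  by rewrite mulSnr -addnA addn1.
split.
- exact: valid_advance (ltnW nd) hp.
- move=> l ln; case: (eqVneq l.+1 n) => [l1n|l1n].
    rewrite -l1n (level_progress_advance_below vq' (ltn_trans ln nd)) ?l1n //.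
    by rewrite q'lo // l1n eqxx subnn.
  by rewrite level_progress_advance_other ?(ltn_eqF ln) // q'lo // (negbTE l1n).
- by rewrite (level_progress_advance vq' (ltnW nd) hp) q'n.
- by move=> l nl; rewrite /advance /upd gtn_eqF // q'hi ?qp // ltnW.
Qed.

Lemma sweepsS : sweeps n.+1 (Q * K.+1).
Proof.
move=> p vp p0; have [q pq [vq q0 qn qp]] := sweep_level vp p0 (leqnn Q).
exists q => //.
split => // l; rewrite ltnS eqSS => ln.
by case: (eqVneq l n) => [->|lnn] //; apply: q0; rewrite ltn_neqAle lnn.
Qed.

End SweepLevel.

Lemma sweeps_exp n : (n < d)%N -> sweeps n.+1 (Q ^ n.+1).
Proof.
elim: n => [|n IHn] nd.
  by rewrite expn1 -[Q in sweeps _ Q]muln1; apply: sweepsS sweeps0.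
apply: sweeps_le (sweepsS nd (IHn (ltnW nd))).
by rewrite expnS leq_mul2l leqnSn orbT.
Qed.

Lemma committee_long_run : (0 < d)%N ->
  runs_from (fun _ => 0%N) (Q ^ d).
Proof.
move=> d0; have sw : sweeps d (Q ^ d).
  by rewrite -(prednK d0); apply: sweeps_exp; rewrite ?prednK.
have [q p0q _] := sw (fun _ => 0%N) (fun _ _ => leq0n Q) (fun _ _ => erefl).
by rewrite -[(Q ^ d)%N]addn0; apply: p0q; exists [::].
Qed.

Lemma construction_improving_run : (0 < d)%N ->
  has_improving_run R (B + d + d.+1) (d * Q * 2 * d * 2 ^ d) (Q ^ d).
Proof.
move=> d0; have [s ls imp] := committee_long_run d0.
exists voter, cand, ballot, (committee (fun=> 0%N)), s.
by split=> //; [rewrite !card_prod !card_ord card_bool | apply: card_committee].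
Qed.

End Counter.

End Construction.

Lemma exp2_ge_sq L : (12 <= L)%N -> (16 * L.+1 ^ 2 <= 2 ^ L)%N.
Proof.
elim: L => [//|L IHL]; rewrite leq_eqVlt => /predU1P[<- //|].
rewrite ltnS => L12; have := IHL L12.
rewrite [(2 ^ L.+1)%N]expnS !expnS expn0 !muln1; move: (2 ^ L)%N => P; nia.
Qed.

Lemma powR_log2_le (R : realType) k : (0 < k)%N ->
  powR (k%:R : R) (ln k%:R / ln 2) <= (k ^ (trunc_log 2 k).+1)%:R.
Proof.
move=> k0; have l2 : (0 : R) < ln 2 by rewrite ln_gt0 // ltr1n.
rewrite natrX -powR_mulrn ?ler0n // ler_powR ?ler1n //.
rewrite ler_pdivrMr // mulr_natl -lnXn ?ltr0n // ler_ln ?posrE ?ltr0n ?exprn_gt0 //.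
by rewrite -natrX ler_nat ltnW // trunc_log_ltn.
Qed.

Lemma expn_trunc_log2_small k : (0 < k)%N -> (k < 2 ^ 12)%N ->
  (k ^ (trunc_log 2 k).+1 <= 2 ^ 144)%N.
Proof.
move=> k0 k_small; have L12 : ((trunc_log 2 k).+1 <= 12)%N.
  by rewrite -(@ltn_exp2l 2) // (leq_ltn_trans (trunc_logP (isT : 1 < 2)%N k0)).
rewrite (_ : 144 = 12 * 12)%N // expnM (@leq_trans ((2 ^ 12) ^ (trunc_log 2 k).+1)) //.
  by rewrite leq_exp2r // ltnW.
by rewrite leq_pexp2l ?expn_gt0.
Qed.

Lemma construction_parameters k : (2 ^ 12 <= k)%N ->
  let L := trunc_log 2 k in let d := (2 * L.+1)%N in
  let B := (k - 2 * d - 1)%N in let Q := (B %/ d)%N in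
  [/\ (Q * d <= B)%N, (B + d + d.+1 = k)%N, (k ^ L.+1 <= Q ^ d)%N
    & (d * Q * 2 * d * 2 ^ d <= 8 * k ^ 5)%N].
Proof.
move=> k_big L d B Q; have k0 : (0 < k)%N by apply: leq_trans k_big.
have /andP[kL kL1] := trunc_log_bounds (isT : 1 < 2)%N k0.
have L12 : (12 <= L)%N by rewrite -ltnS -(@ltn_exp2l 2) // (leq_ltn_trans k_big kL1).
have dk : (16 * L.+1 ^ 2 <= k)%N := leq_trans (exp2_ge_sq L12) kL.
have BE : (d * Q + B %% d = B)%N by rewrite mulnC -divn_eq.
have Bd : (B %% d < d)%N by rewrite ltn_mod.
have kQQ : (k <= Q * Q)%N.
  move: BE Bd dk; rewrite /B /d !expnS expn0; move: (B %% _)%N Q => b q; nia.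
split.
- by rewrite mulnC -BE leq_addr.
- by rewrite /B /d; move: dk; rewrite !expnS expn0; nia.
- by rewrite /d expnM leq_exp2r // mulnn.
have Qk : (Q <= k)%N by rewrite (leq_trans (leq_div _ _)) // /B; lia.
have dk' : (d <= k)%N by move: dk; rewrite /d !expnS expn0; nia.
have d2 : (2 ^ d <= 4 * k ^ 2)%N.
  have -> : (2 ^ d = 4 * (2 ^ L) ^ 2)%N.
    by rewrite -expnM (_ : 4 = 2 ^ 2)%N // -expnD /d; congr (2 ^ _)%N; lia.
  by rewrite leq_mul2l leq_exp2r.
rewrite (_ : 8 * k ^ 5 = k * k * 2 * k * (4 * k ^ 2))%N; last first.
  by rewrite !expnS expn0; lia.
by rewrite !leq_mul.
Qed.

Lemma large_improving_run (R : numFieldType) k : (2 ^ 12 <= k)%N ->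
  has_improving_run R k (8 * k ^ 5) (k ^ (trunc_log 2 k).+1).
Proof.
move=> k_big; have [QdB kE long voters] := construction_parameters k_big.
rewrite -[in has_improving_run R k]kE.
exact: has_improving_run_le voters long (construction_improving_run R QdB _).
Qed.

Lemma improving_run_exists (R : numFieldType) k : (0 < k)%N ->
  exists nv len, [/\ has_improving_run R k nv len, (nv <= 8 * k ^ 5)%N
                    & (k ^ (trunc_log 2 k).+1 <= 2 ^ 144 * len)%N].
Proof.
move=> k0; case: (ltnP k (2 ^ 12)) => k_size.
  exists 1%N, 1%N; split; last by rewrite muln1 expn_trunc_log2_small.
    by rewrite -(prednK k0); apply: single_swap_run.
  by rewrite muln_gt0 expn_gt0 k0.
exists (8 * k ^ 5)%N, (k ^ (trunc_log 2 k).+1)%N; split => //.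
  exact: large_improving_run.
by rewrite leq_pmull ?expn_gt0.
Qed.

Theorem theorem3 (R : realType) :
  exists (p : {poly R}) (c : R), 0 < c /\
  forall k : nat, (1 <= k)%N ->
    exists (m n : nat) (A : 'I_n -> {set 'I_m}) (W0 : {set 'I_m})
           (s : seq ('I_m * 'I_m)),
      [/\ n%:R <= p.[k%:R],
          #|W0| = k,
          c * powR (k%:R : R) (ln (k%:R : R) / ln (2 : R)) <= (size s)%:R
        & pav_improving_seq R A W0 s].
Proof.
exists ('X^5 *+ 8), (2 ^ 144)%:R^-1; split; first by rewrite invr_gt0 ltr0n expn_gt0.
move=> k k0; have [nv [len [run nv_le len_ge]]] := improving_run_exists R k0.
have [m [n [A [W0 [s [n_le W0k len_le imp]]]]]] := ordinal_improving_run run.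
exists m, n, A, W0, s; split => //.
  rewrite hornerMn hornerXn -natrX -[(k ^ 5)%:R *+ 8]mulr_natr -natrM ler_nat mulnC.
  exact: leq_trans n_le nv_le.
rewrite (le_trans (ler_wpM2l _ (powR_log2_le R k0))) ?invr_ge0 ?ler0n //.
rewrite ler_pdivrMl ?ltr0n ?expn_gt0 // -natrM ler_nat (leq_trans len_ge) //.
by rewrite leq_mul2l len_le orbT.
Qed.
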